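(* Let $p$ be a prime, $\alpha,\beta\in\overline{\mathbf F_p}$ with $\alpha\ne0$, and let $k,N$ be integers with $0\le k<N<p$. (i) There exists $\lambda\in\mathbf F_p(\alpha^N)$ such that $|\mathbf F_p((\beta+\lambda\alpha^k)^N)|\ge|\mathbf F_p(\alpha^N)|$. (ii) If $\mathbf F_p(\alpha^N)\ne\mathbf F_p(\alpha^N,\beta^N,\alpha^k\beta^{N-1})$, then there exists $\lambda\in\mathbf F_p(\alpha^N)$ such that $|\mathbf F_p((\beta+\lambda\alpha^k)^N)|>|\mathbf F_p(\alpha^N)|$.
   Context: $\overline{\mathbf F_p}$ denotes an algebraic closure of the field $\mathbf F_p$ with $p$ elements; $\mathbf F_p(\gamma)$ is the subfield generated by $\gamma$. *)

From HB Require Import structures.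
From mathcomp Require Import all_boot all_order all_algebra all_field.
Set Implicit Arguments. Unset Strict Implicit. Unset Printing Implicit Defensive.
Import GRing.Theory.
Local Open Scope ring_scope.

(* S is a subfield of the (finite) field L: contains 0 and 1, closed under
   subtraction, multiplication and inversion (x^-1 of 0 is 0 in mathcomp). *)
Definition is_subfield (L : finFieldType) (S : {set L}) : bool :=
  [&& (0 : L) \in S, (1 : L) \in S,
      [forall x in S, forall y in S, (x - y \in S) && (x * y \in S)]
    & [forall x in S, x^-1 \in S]].

Definition Fgen (L : finFieldType) (A : {set L}) : {set L} :=
  \bigcap_(S : {set L} | is_subfield S && (A \subset S)) S.

Definition Fgen1 (L : finFieldType) (g : L) : {set L} := Fgen [set g].

(* Let K = F_p(alpha^N), of order q = p^d, and c = alpha^k.  The elements g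
   with |F_p(g)| < q lie in the subfields of order p^j, 0 < j < d, so there are
   at most (q - p)/(p - 1) of them.  As l |-> (c l + beta)^N takes each value at
   most N <= p - 1 times, fewer than q elements l of K give such a small value,
   which proves (i).  For (ii), a value generating a field of order exactly q
   is fixed by x |-> x^q; for l in K this makes l a root of G^(q) - G, where
   G = (c X + beta)^N and G^(q) raises the coefficients to the q-th power.
   That polynomial has degree < N, since c^N lies in K, and it vanishes only if
   beta^N and c beta^(N-1) both lie in K.  These at most N - 1 further
   exceptions still leave a good l. *)

From HB Require Import structures.
From mathcomp Require Import all_boot all_order all_algebra all_field all_fingroup.
From mathcomp Require Import zify.
Set Implicit Arguments. Unset Strict Implicit. Unset Printing Implicit Defensive.
Import GRing.Theory.
Local Open Scope ring_scope.

Lemma card_bigcup_le (I : Type) (T : finType) (r : seq I) (P : pred I) (F : I -> {set T}) :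
  (#|\bigcup_(i <- r | P i) F i| <= \sum_(i <- r | P i) #|F i|)%N.
Proof.
apply: (big_ind2 (fun (A : {set T}) n => #|A| <= n)%N) => [|A m B n|//].
  by rewrite cards0.
by move=> leAm leBn; rewrite cardsU (leq_trans (leq_subr _ _)) ?leq_add.
Qed.

Lemma predn_exp_sum p d : (0 < p)%N -> (0 < d)%N ->
  (p.-1 * \sum_(j < d | (0 < j)%N) p ^ j + p = p ^ d)%N.
Proof.
case: d => // d p_gt0 _; have := predn_exp p d.+1.
rewrite big_ord_recl [in X in _ -> X]big_mkcond big_ord_recl /= expn0 mulnDr muln1 add0n.
by have := expn_gt0 p d.+1; rewrite p_gt0; lia.
Qed.

Lemma coef_linear_exp (R : comNzRingType) (c b : R) N j :
  ((c%:P * 'X + b%:P) ^+ N)`_j = c ^+ j * b ^+ (N - j) *+ 'C(N, j).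
Proof.
rewrite addrC exprDn coef_sum.
under eq_bigr => i _ do rewrite exprMn -!polyC_exp mulrA -polyCM coefMn coefCM coefXn.
have [ltNj|lejN] := ltnP N j.
  rewrite bin_small // mulr0n big1 // => i _.
  have ltij : (i < j)%N by apply: leq_ltn_trans (leq_ord i) ltNj.
  by rewrite (gtn_eqF ltij) mulr0 mul0rn.
rewrite (bigD1 (inord j)) //= inordK // eqxx mulr1 mulrC big1 ?addr0 //.
by move=> i /negbTE; rewrite -val_eqE /= inordK // eq_sym => ->; rewrite mulr0 mul0rn.
Qed.

Lemma card_linear_exp_fiber (R : finIdomainType) (c b s : R) N :
  (0 < N)%N -> c != 0 -> (#|[set l | (c * l + b) ^+ N == s]| <= N)%N.
Proof.
move=> N_gt0 c_neq0; set P := (c%:P * 'X + b%:P) ^+ N - s%:P.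
have size_P : (size P <= N.+1)%N.
  apply/leq_sizeP => j ltNj; rewrite coefB coefC coef_linear_exp bin_small //.
  by rewrite (gtn_eqF (ltn_trans N_gt0 ltNj)) mulr0n subr0.
have P_neq0 : P != 0.
  apply: contraTneq (expf_neq0 N c_neq0) => P0; apply/negPn/eqP.
  have := congr1 (coefp N) P0.
  by rewrite /= coefB coefC coef_linear_exp binn gtn_eqF // subnn expr0 mulr1 subr0 coef0.
rewrite -ltnS cardE (leq_trans _ size_P) // max_poly_roots ?enum_uniq //.
by apply/allP=> x; rewrite mem_enum inE /root /P !hornerE subr_eq0.
Qed.

Section Subfields.
Variable L : finFieldType.
Implicit Types (A S : {set L}) (x y g : L).

Lemma subfield0 S : is_subfield S -> 0 \in S. Proof. by case/and4P. Qed.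
Lemma subfield1 S : is_subfield S -> 1 \in S. Proof. by case/and4P. Qed.

Lemma subfieldBM S x y : is_subfield S -> x \in S -> y \in S ->
  (x - y \in S) && (x * y \in S).
Proof. by case/and4P=> _ _ /'forall_implyP/(_ x) + _ xS yS => /(_ xS)/'forall_implyP; apply. Qed.

Lemma subfieldB S x y : is_subfield S -> x \in S -> y \in S -> x - y \in S.
Proof. by move=> sS xS yS; case/andP: (subfieldBM sS xS yS). Qed.

Lemma subfieldM S x y : is_subfield S -> x \in S -> y \in S -> x * y \in S.
Proof. by move=> sS xS yS; case/andP: (subfieldBM sS xS yS). Qed.

Lemma subfieldX S x n : is_subfield S -> x \in S -> x ^+ n \in S.
Proof.
move=> sS xS; elim: n => [|n IHn]; first by rewrite expr0 subfield1.
by rewrite exprS subfieldM.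
Qed.

Lemma subfieldV S x : is_subfield S -> x \in S -> x^-1 \in S.
Proof. by case/and4P=> _ _ _ /'forall_implyP; apply. Qed.

Lemma Fgen_subfield A : is_subfield (Fgen A).
Proof.
apply/and4P; split.
- by apply/bigcapP => S /andP[/subfield0].
- by apply/bigcapP => S /andP[/subfield1].
- apply/'forall_implyP => x /bigcapP xA; apply/'forall_implyP => y /bigcapP yA.
  by apply/andP; split; apply/bigcapP => S SA; case/andP: (SA) => sS _;
    [apply: subfieldB | apply: subfieldM]; rewrite // ?xA ?yA.
- apply/'forall_implyP => x /bigcapP xA; apply/bigcapP => S SA.
  by case/andP: (SA) => sS _; rewrite subfieldV ?xA.
Qed.

Lemma subset_Fgen A : A \subset Fgen A.
Proof. by apply/subsetP=> x xA; apply/bigcapP => S /andP[_ /subsetP]; apply. Qed.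

Lemma mem_Fgen1 g : g \in Fgen1 g.
Proof. by apply: (subsetP (subset_Fgen _)); rewrite inE. Qed.

Lemma Fgen_sub A S : is_subfield S -> A \subset S -> Fgen A \subset S.
Proof. by move=> sS AS; apply: bigcap_inf; rewrite sS AS. Qed.

Lemma Fgen_eq_Fgen1 A g : g \in A -> A \subset Fgen1 g -> Fgen A = Fgen1 g.
Proof.
move=> gA AG; apply/eqP; rewrite eqEsubset Fgen_sub ?Fgen_subfield //=.
by rewrite Fgen_sub ?Fgen_subfield // sub1set (subsetP (subset_Fgen A)).
Qed.

Lemma subfield_card_gt1 S : is_subfield S -> (1 < #|S|)%N.
Proof.
move=> sS; have := cards2 (0 : L) 1; rewrite eq_sym oner_neq0 => <-.
apply: subset_leq_card.
by apply/subsetP => x; rewrite !inE => /orP[] /eqP ->; [apply: subfield0 | apply: subfield1].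
Qed.

(* Multiplication by a nonzero [x] permutes [S :\ 0], so [x ^+ #|S :\ 0|] fixes
   the nonzero product of its elements. *)
Lemma expr_card_subfield S x : is_subfield S -> x \in S -> x ^+ #|S| = x.
Proof.
move=> sS xS; set S' := S :\ 0.
have cardS : #|S| = #|S'|.+1 by rewrite (cardsD1 0 S) (subfield0 sS).
have [->|x0] := eqVneq x 0; first by rewrite cardS expr0n.
have xS' : [set x * y | y in S'] = S'.
  apply/eqP; rewrite eqEcard card_imset ?leqnn ?andbT; last exact: mulfI.
  apply/subsetP=> z /imsetP[y]; rewrite !inE => /andP[y0 yS] ->.
  by rewrite mulf_eq0 negb_or x0 y0 subfieldM.
have prod_neq0 : \prod_(y in S') y != 0.
  by rewrite prodf_seq_neq0; apply/allP=> y _; apply/implyP; rewrite !inE => /andP[].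
have : \prod_(y in S') y = x ^+ #|S'| * \prod_(y in S') y.
  rewrite -{1}xS' big_imset /=; last by move=> a b _ _; apply: mulfI.
  by rewrite big_split /= prodr_const.
rewrite -{1}[\prod_(y in S') y]mul1r => /esym/(mulIf prod_neq0) x1.
by rewrite cardS exprS x1 mulr1.
Qed.

Lemma card_expr_fixed q : (1 < q)%N -> (#|[set x : L | x ^+ q == x]| <= q)%N.
Proof.
move=> q_gt1; set P : {poly L} := 'X^q - 'X.
have sizeP : size P = q.+1 by rewrite size_polyDl ?size_polyXn // size_polyN size_polyX.
have P_neq0 : P != 0 by rewrite -size_poly_eq0 sizeP.
rewrite -ltnS -sizeP cardE max_poly_roots ?enum_uniq //.
by apply/allP=> x; rewrite mem_enum inE /root /P !hornerE subr_eq0.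
Qed.

Lemma subfieldE S : is_subfield S -> S = [set x | x ^+ #|S| == x].
Proof.
move=> sS; apply/eqP; rewrite eqEcard card_expr_fixed ?subfield_card_gt1 // andbT.
by apply/subsetP => x xS; rewrite inE expr_card_subfield.
Qed.

End Subfields.

Section PrimeCharacteristic.
Variables (p : nat) (L : finFieldType).
Hypothesis pcharLp : p \in [pchar L].
Implicit Types S : {set L}.

Lemma card_subfield_pexp S : is_subfield S -> exists2 j, (0 < j)%N & #|S| = (p ^ j)%N.
Proof.
move=> sS; have S0 := subfield0 sS.
have group_S : group_set S.
  apply/group_setP; split=> // x y xS yS.
  by rewrite FinRing.zmodMgE -[y : L]opprK -[- (y : L)]sub0r !subfieldB.
have /(dvdn_pfactor _ _ (pcharf_prime pcharLp))[j _ cardS] :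
    (#|S| %| p ^ logn p #|pPrimeCharType pcharLp|)%N.
  by rewrite -card_pprimeChar -cardsT (cardSg (subsetT (Group group_S))).
exists j => //; move: (subfield_card_gt1 sS); rewrite cardS.
by case: j {cardS} => //; rewrite expn0.
Qed.

Lemma pnat_pchar_expn d : [pchar L].-nat (p ^ d)%N.
Proof. by rewrite pnatX (pnatE _ (pcharf_prime pcharLp)) pcharLp. Qed.

Section FrobeniusPower.
Variable d : nat.

Definition frobenius_pow (x : L) := x ^+ (p ^ d).

Lemma frobenius_pow_is_nmod_morphism : nmod_morphism frobenius_pow.
Proof.
split=> [|x y]; last exact: (exprDn_pchar _ _ (pnat_pchar_expn d)).
by rewrite /frobenius_pow expr0n eqn0Ngt expn_gt0 (prime_gt0 (pcharf_prime pcharLp)).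
Qed.

Lemma frobenius_pow_is_monoid_morphism : monoid_morphism frobenius_pow.
Proof. by split=> [|x y]; rewrite /frobenius_pow ?expr1n ?exprMn. Qed.

HB.instance Definition _ := GRing.isNmodMorphism.Build L L frobenius_pow
  frobenius_pow_is_nmod_morphism.
HB.instance Definition _ := GRing.isMonoidMorphism.Build L L frobenius_pow
  frobenius_pow_is_monoid_morphism.

Lemma card_frobenius_pow_fixed_values (c b : L) N : (0 < N < p)%N ->
    frobenius_pow (c ^+ N) = c ^+ N ->
    ~~ ((frobenius_pow (b ^+ N) == b ^+ N) &&
        (frobenius_pow (c * b ^+ (N - 1)) == c * b ^+ (N - 1))) ->
  (#|[set l | (frobenius_pow l == l) &&
              (frobenius_pow ((c * l + b) ^+ N) == (c * l + b) ^+ N)]| < N)%N.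
Proof.
move=> /andP[N_gt0 ltNp] fix_cN not_fix.
set G := (c%:P * 'X + b%:P) ^+ N; set h := map_poly frobenius_pow G - G.
have coef_h j : h`_j = frobenius_pow G`_j - G`_j by rewrite coefB coef_map.
have size_h : (size h <= N)%N.
  apply/leq_sizeP => j; rewrite leq_eqVlt coef_h coef_linear_exp => /orP[/eqP <-|ltNj].
    by rewrite subnn expr0 mulr1 binn fix_cN subrr.
  by rewrite bin_small // mulr0n rmorph0 subrr.
have h_neq0 : h != 0.
  apply: contra not_fix => /eqP h0.
  have fix_coef j : frobenius_pow G`_j = G`_j by apply/eqP; rewrite -subr_eq0 -coef_h h0 coef0.
  have := fix_coef 0%N; have := fix_coef 1%N.
  rewrite !coef_linear_exp !expr0 mul1r subn0 bin0 bin1 expr1 !mulr1n rmorphMn.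
  have N_neq0 : (N%:R : L) != 0 by rewrite -(dvdn_pcharf pcharLp) gtnNdvd.
  move=> fix1 ->; rewrite eqxx /=; apply/eqP/(mulIf N_neq0).
  by rewrite !mulr_natr.
have fixed_roots : all (root h) (enum [set l | (frobenius_pow l == l) &&
              (frobenius_pow ((c * l + b) ^+ N) == (c * l + b) ^+ N)]).
  apply/allP => l; rewrite mem_enum inE => /andP[/eqP fix_l fix_val].
  by rewrite /root /h hornerD hornerN -{1}fix_l horner_map /G !hornerE subr_eq0.
by rewrite cardE (leq_trans (max_poly_roots h_neq0 fixed_roots (enum_uniq _))).
Qed.

End FrobeniusPower.

Lemma card_small_Fgen1 d : (0 < d)%N ->
  (p.-1 * #|[set g : L | (#|Fgen1 g| < p ^ d)%N]| + p <= p ^ d)%N.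
Proof.
move=> d_gt0; have p_gt1 := prime_gt1 (pcharf_prime pcharLp).
rewrite -{2}(predn_exp_sum (ltnW p_gt1) d_gt0) leq_add2r leq_mul2l; apply/orP; right.
apply: (@leq_trans #|\bigcup_(j < d | (0 < j)%N) [set x : L | x ^+ (p ^ j) == x]|).
  apply/subset_leq_card/subsetP => g; rewrite inE => small_g.
  have [j j_gt0 cardG] := card_subfield_pexp (Fgen_subfield [set g]).
  have ltjd : (j < d)%N by rewrite -(ltn_exp2l _ _ p_gt1) -cardG.
  apply/bigcupP; exists (Ordinal ltjd) => //.
  by rewrite inE -cardG expr_card_subfield ?Fgen_subfield ?mem_Fgen1.
apply: leq_trans (card_bigcup_le _ _ _) _.
apply: leq_sum => j j_gt0.
by apply: card_expr_fixed; rewrite -{1}(expn0 p) ltn_exp2l.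
Qed.

Section ValuesOnSubfield.
Variables (K : {set L}) (d : nat) (c b : L) (N : nat).
Hypotheses (sK : is_subfield K) (cardK : #|K| = (p ^ d)%N).
Hypotheses (c_neq0 : c != 0) (N_gt0 : (0 < N)%N) (ltNp : (N < p)%N).

Let small := [set g : L | (#|Fgen1 g| < p ^ d)%N].

Let d_gt0 : (0 < d)%N.
Proof. by move: (subfield_card_gt1 sK); rewrite cardK; case: d => //; rewrite expn0. Qed.

Let card_small_values :
  (#|[set l in K | (c * l + b) ^+ N \in small]| <= p.-1 * #|small|)%N.
Proof.
apply: (@leq_trans #|\bigcup_(s in small) [set l | (c * l + b) ^+ N == s]|).
  apply/subset_leq_card/subsetP => l; rewrite inE => /andP[_ small_l].
  by apply/bigcupP; exists ((c * l + b) ^+ N) => //; rewrite inE.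
rewrite mulnC -sum_nat_const (leq_trans (card_bigcup_le _ _ _)) // leq_sum // => s _.
rewrite (leq_trans (card_linear_exp_fiber _ _ N_gt0 c_neq0)) // -ltnS prednK //.
exact: prime_gt0 (pcharf_prime pcharLp).
Qed.

Lemma exists_subfield_value_Fgen1_ge :
  exists2 l, l \in K & (p ^ d <= #|Fgen1 ((c * l + b) ^+ N)|)%N.
Proof.
have : ~~ (K \subset [set l in K | (c * l + b) ^+ N \in small]).
  apply/negP => /subset_leq_card; rewrite cardK => le_K.
  have := card_small_Fgen1 d_gt0; rewrite -/small.
  by have := leq_trans le_K card_small_values; lia.
by case/subsetPn => l lK; rewrite !inE lK -leqNgt; exists l.
Qed.

Lemma exists_subfield_value_Fgen1_gt : c ^+ N \in K ->
    ~~ ((b ^+ N \in K) && (c * b ^+ (N - 1) \in K)) ->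
  exists2 l, l \in K & (p ^ d < #|Fgen1 ((c * l + b) ^+ N)|)%N.
Proof.
have memK x : (x \in K) = (frobenius_pow d x == x) by rewrite {1}(subfieldE sK) inE cardK.
rewrite !memK => fix_cN not_fix.
set fixed := [set l | (frobenius_pow d l == l) &&
  (frobenius_pow d ((c * l + b) ^+ N) == (c * l + b) ^+ N)].
have card_fixed : (#|fixed| < N)%N.
  by apply: card_frobenius_pow_fixed_values; rewrite ?N_gt0 ?(eqP fix_cN).
have small_or_fixed : [set l in K | (#|Fgen1 ((c * l + b) ^+ N)| <= p ^ d)%N] \subset
    [set l in K | (c * l + b) ^+ N \in small] :|: fixed.
  apply/subsetP => l; rewrite !inE => /andP[lK]; rewrite lK leq_eqVlt => /orP[/eqP cardG|->//].
  have fix_val : frobenius_pow d ((c * l + b) ^+ N) == (c * l + b) ^+ N.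
    by rewrite /frobenius_pow -cardG expr_card_subfield ?Fgen_subfield ?mem_Fgen1.
  by rewrite fix_val -memK lK orbT.
have : ~~ (K \subset [set l in K | (#|Fgen1 ((c * l + b) ^+ N)| <= p ^ d)%N]).
  apply/negP => /subset_leq_card /leq_trans /(_ (subset_leq_card small_or_fixed)).
  move/leq_trans/(_ (leq_card_setU _ _)); rewrite cardK => le_K.
  by have := card_small_Fgen1 d_gt0; rewrite -/small; have := card_small_values; lia.
by case/subsetPn => l lK; rewrite !inE lK -ltnNge; exists l.
Qed.

End ValuesOnSubfield.

End PrimeCharacteristic.

Theorem mainTheorem19 (p : nat) (L : finFieldType) (hp : prime p)
    (hchar : p \in [pchar L]) (alpha beta : L) (k N : nat) :
  alpha != 0 -> (k < N)%N -> (N < p)%N ->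
  (exists2 lam : L, lam \in Fgen1 (alpha ^+ N) &
      (#|Fgen1 (alpha ^+ N)| <= #|Fgen1 ((beta + lam * alpha ^+ k) ^+ N)|)%N)
  /\
  (Fgen1 (alpha ^+ N) != Fgen [set alpha ^+ N; beta ^+ N; alpha ^+ k * beta ^+ (N - 1)] ->
   exists2 lam : L, lam \in Fgen1 (alpha ^+ N) &
      (#|Fgen1 (alpha ^+ N)| < #|Fgen1 ((beta + lam * alpha ^+ k) ^+ N)|)%N).
Proof.
move=> alpha_neq0 ltkN ltNp.
have N_gt0 : (0 < N)%N by apply: leq_ltn_trans ltkN.
set K := Fgen1 (alpha ^+ N); have sK : is_subfield K := Fgen_subfield _.
have [d _ cardK] := card_subfield_pexp hchar sK.
have c_neq0 : alpha ^+ k != 0 by rewrite expf_neq0.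
have shift l : beta + l * alpha ^+ k = alpha ^+ k * l + beta by rewrite addrC mulrC.
split.
  have [l lK ge] := exists_subfield_value_Fgen1_ge hchar beta sK cardK c_neq0 N_gt0 ltNp.
  by exists l; rewrite // cardK shift.
move=> K_neq; have cN_K : (alpha ^+ k) ^+ N \in K.
  by rewrite -exprM mulnC exprM subfieldX ?mem_Fgen1.
have [|l lK gt] :=
  exists_subfield_value_Fgen1_gt hchar (b := beta) sK cardK c_neq0 N_gt0 ltNp cN_K.
  move: K_neq; apply: contraNN => /andP[bN_K cb_K].
  rewrite eq_sym (Fgen_eq_Fgen1 (g := alpha ^+ N)) ?inE ?eqxx //.
  by apply/subsetP => x; rewrite !inE -orbA => /or3P[] /eqP ->; rewrite ?mem_Fgen1.
by exists l; rewrite // cardK shift.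
Qed.
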